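(* Let $A$ be a Boolean algebra and $B$ a Boolean $\sigma$-algebra. Then every Boolean algebra homomorphism $\phi\colon A\to B$ extends uniquely, along the natural inclusion $A\hookrightarrow A^\infty$, to a $\sigma$-homomorphism $\Phi\colon A^\infty\to B$.
   Context: A Boolean $\sigma$-algebra is a Boolean algebra with all countable suprema and infima; a $\sigma$-homomorphism between Boolean $\sigma$-algebras is a Boolean homomorphism preserving countable suprema. For a compact Hausdorff space $X$, the Baire $\sigma$-algebra $\mathsf{Baire}(X)$ is the smallest $\sigma$-algebra on $X$ making all continuous functions $X\to\mathbb{R}$ measurable. The Baire envelope of a Boolean algebra $A$ is $A^\infty:=\mathsf{Baire}(\mathrm{Stone}(A))$, where $\mathrm{Stone}(A)$ is the Stone space; the natural inclusion $A\hookrightarrow A^\infty$ identifies each element of $A$ with the corresponding clopen subset of $\mathrm{Stone}(A)$. *)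

From HB Require Import structures.
From mathcomp Require Import all_boot all_order all_algebra.
From mathcomp Require Import all_classical all_reals all_analysis.
From mathcomp Require Import Rstruct Rstruct_topology.
From Stdlib Require Import Reals.

Set Implicit Arguments.
Unset Strict Implicit.
Unset Printing Implicit Defensive.

Import Order.TTheory.
Local Open Scope classical_set_scope.

(** Boolean algebras are MathComp's complemented distributive lattices
    with top and bottom: [ctbDistrLatticeType d]. *)

Section BoolAlg.
Context {dA dB : Order.disp_t}
        {A : ctbDistrLatticeType dA} {B : ctbDistrLatticeType dB}.

Definition bool_hom (f : A -> B) : Prop :=
  [/\ f \bot%O = \bot%O, f \top%O = \top%O,
      (forall x y, f (Order.join x y) = Order.join (f x) (f y)),
      (forall x y, f (Order.meet x y) = Order.meet (f x) (f y))
    & (forall x, f (Order.compl x) = Order.compl (f x))].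
End BoolAlg.

Section Sup.
Context {d : Order.disp_t} {B : ctbDistrLatticeType d}.

Definition is_lub (s : nat -> B) (b : B) : Prop :=
  (forall n, (s n <= b)%O) /\ (forall c, (forall n, (s n <= c)%O) -> (b <= c)%O).

Definition is_glb (s : nat -> B) (b : B) : Prop :=
  (forall n, (b <= s n)%O) /\ (forall c, (forall n, (c <= s n)%O) -> (c <= b)%O).

Definition sigma_complete : Prop :=
  forall s : nat -> B, (exists b, is_lub s b) /\ (exists b, is_glb s b).
End Sup.
Arguments sigma_complete {d} B.

Section Stone.
Context {d : Order.disp_t} (A : ctbDistrLatticeType d).

Definition ultrafilter (U : set A) : Prop :=
  [/\ ~ U \bot%O, U \top%O,
      (forall x y, U x -> (x <= y)%O -> U y),
      (forall x y, U x -> U y -> U (Order.meet x y))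
    & (forall x, U x \/ U (Order.compl x))].

Definition stone : Type := {U : set A | ultrafilter U}.

(** Basic clopen set of [a], i.e. the image of [a] under A -> A^infty. *)
Definition clopen (a : A) : set stone := fun U => proj1_sig U a.

Definition stone_open (O : set stone) : Prop :=
  forall U, O U -> exists a : A, clopen a U /\ (forall V, clopen a V -> O V).

Definition stone_continuous (f : stone -> R) : Prop :=
  forall V : set R, open V -> stone_open (f @^-1` V).

Definition baire (X : set stone) : Prop :=
  forall S : set (set stone),
    sigma_algebra setT S ->
    (forall f, stone_continuous f ->
       forall W : set R, @measurable _ (measurableTypeR R) W -> S (f @^-1` W)) ->
    S X.

(** Least upper bound of a sequence in A^infty = Baire(Stone A),
    ordered by inclusion. *)
Definition baire_lub (X : nat -> set stone) (Y : set stone) : Prop :=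
  baire Y /\ (forall n, X n `<=` Y) /\
  (forall Z, baire Z -> (forall n, X n `<=` Z) -> Y `<=` Z).

(** sigma-homomorphism A^infty -> B, with A^infty represented by the Baire
    sets; only the values on Baire sets matter. *)
Definition baire_sigma_hom {dB : Order.disp_t} {B : ctbDistrLatticeType dB}
  (Phi : set stone -> B) : Prop :=
  [/\ Phi set0 = \bot%O /\ Phi setT = \top%O,
      (forall X Y, baire X -> baire Y ->
         Phi (setU X Y) = Order.join (Phi X) (Phi Y)),
      (forall X Y, baire X -> baire Y ->
         Phi (setI X Y) = Order.meet (Phi X) (Phi Y)),
      (forall X, baire X -> Phi (setC X) = Order.compl (Phi X))
    & (forall (X : nat -> set stone) Y, (forall n, baire (X n)) ->
         baire_lub X Y -> is_lub (fun n => Phi (X n)) (Phi Y))].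
End Stone.

(* Loomis-Sikorski argument.  The dual of [phi] is a map [stone_map] from
   Stone(B) to Stone(A).  Say that [b : B] represents a set [Y] of ultrafilters
   of [B] when [Y] and [clopen b] differ by a meager set; by the Baire category
   theorem for Stone(B), such a [b] is unique.  The sets of Stone(A) whose
   preimage under [stone_map] is represented form a sigma-algebra containing the
   clopens: a countable union is represented by the supremum of the
   representatives, because [clopen (sup b_n)] exceeds the union of the
   [clopen b_n] only by a nowhere dense set.  As each set [{f > r}] with [f]
   continuous is a countable union of clopens, the clopens generate the Baire
   sets.  Hence every Baire set has a representative, which defines the
   extension, and two sigma-homomorphisms agreeing on the clopens agree on all
   Baire sets. *)

From HB Require Import structures.
From mathcomp Require Import all_boot all_order all_algebra.
From mathcomp Require Import all_classical all_reals all_analysis.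
From mathcomp Require Import Rstruct Rstruct_topology.
From Stdlib Require Import Reals.

Set Implicit Arguments.
Unset Strict Implicit.
Unset Printing Implicit Defensive.

Import Order.Theory GRing.Theory Num.Theory.
Local Open Scope classical_set_scope.
Local Open Scope order_scope.

Section Clopen.
Context {d : Order.disp_t} {L : ctbDistrLatticeType d}.
Implicit Types (x y : L) (U : stone L).

Lemma clopenS x y : x <= y -> clopen x `<=` clopen y.
Proof. by move=> xy [F [_ _ Fup _ _]] /= Fx; apply: Fup xy. Qed.

Lemma clopenT : clopen \top = [set: stone L].
Proof. by apply/seteqP; split => // -[F []]. Qed.

Lemma clopen0 : clopen \bot = set0 :> set (stone L).
Proof. by apply/seteqP; split => // -[F []]. Qed.

Lemma clopenI x y : clopen (x `&` y) = setI (clopen x) (clopen y).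
Proof.
apply/seteqP; split => [U xyU|[F [_ _ _ Fmeet _]] [/= Fx Fy]]; last exact: Fmeet.
by split; apply: clopenS xyU; [exact: leIl|exact: leIr].
Qed.

Lemma clopenC x : clopen (~` x) = setC (clopen x).
Proof.
apply/seteqP; split => U; last by case: (proj2_sig U) => _ _ _ _ /(_ x) [].
move=> xCU xU; suff : (set0 : set (stone L)) U by [].
by rewrite -clopen0 -(meetxC x) clopenI.
Qed.

Lemma clopenU x y : clopen (x `|` y) = setU (clopen x) (clopen y).
Proof. by rewrite -[x `|` y]complK complU clopenC clopenI !clopenC setCI !setCK. Qed.

End Clopen.

Section UltrafilterLemma.
Context {d : Order.disp_t} {L : ctbDistrLatticeType d}.
Implicit Types (x y : L) (F G : set L).

Definition proper_filter F :=
  [/\ F \top, (forall x y, F x -> x <= y -> F y),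
      (forall x y, F x -> F y -> F (x `&` y)) & ~ F \bot].

Lemma maximal_proper_filter_ultra F : proper_filter F ->
  (forall G, F `<` G -> ~ proper_filter G) -> ultrafilter F.
Proof.
move=> [FT Fup Fmeet Fbot] Fmax; split=> // x.
have [Fx|nFx] := pselect (F x); [by left|right].
pose G := [set y | exists2 a, F a & a `&` x <= y].
have [[a Fa]|nGbot] := pselect (G \bot).
  by rewrite lex0 disj_leC => /(Fup _ _ Fa).
exfalso; apply: (Fmax G); last split => //.
- split; first by move=> y Fy; exists y => //; exact: leIl.
  by move=> /(_ x) GF; apply: nFx; apply: GF; exists \top => //; rewrite meet1x.
- by exists \top => //; exact: lex1.
- by move=> y z [a Fa ay] yz; exists a => //; exact: le_trans yz.
- move=> y z [a Fa ay] [b Fb bz]; exists (a `&` b); first exact: Fmeet.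
  by rewrite lexI (le_trans _ ay) ?(le_trans _ bz) // leI2 ?leIl ?leIr.
Qed.

Lemma bigcup_proper_filter (C : set (set L)) : total_on C subset ->
  (forall X x, C X -> X x -> proper_filter X) -> (exists2 X, C X & X !=set0) ->
  proper_filter (\bigcup_(X in C) X).
Proof.
move=> Ctot Cfilter [X CX [x Xx]]; have [XT _ _ _] := Cfilter X x CX Xx.
split; first by exists X.
- move=> y z [Y CY Yy] yz; exists Y => //.
  by have [_ Yup _ _] := Cfilter Y y CY Yy; exact: Yup yz.
- move=> y z [Y CY Yy] [Z CZ Zz].
  without loss YZ : y z Y Z CY CZ Yy Zz / Y `<=` Z.
    move=> wlog; case: (Ctot Y Z CY CZ) => [|ZY]; first exact: wlog.
    by rewrite meetC; exact: wlog ZY.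
  exists Z => //; have [_ _ Zmeet _] := Cfilter Z z CZ Zz.
  exact: Zmeet (YZ _ Yy) Zz.
- by move=> [Y CY Ybot]; have [_ _ _] := Cfilter Y _ CY Ybot.
Qed.

(* [Zorn_bigcup] needs an upper bound for the empty chain too, hence the
   alternative [G = set0]. *)
Lemma proper_filter_ultra F : proper_filter F ->
  exists U : stone L, F `<=` proj1_sig U.
Proof.
move=> Fprop; have [FT _ _ _] := Fprop.
pose P G := G = set0 \/ proper_filter G /\ F `<=` G.
have [M [PM Mmax]] : exists M, P M /\ forall G, M `<` G -> ~ P G.
  apply: Zorn_bigcup => C CP Ctot.
  have Cfilter X x : C X -> X x -> proper_filter X /\ F `<=` X.
    by move=> CX Xx; case: (CP X CX) => // X0; rewrite X0 in Xx.
  have [[X CX [x Xx]]|C0] := pselect (exists2 X, C X & X !=set0); last first.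
    left; apply/seteqP; split => // x [X CX Xx].
    by apply: C0; exists X => //; exists x.
  right; split.
    apply: bigcup_proper_filter => [//|Y y CY /(Cfilter Y y CY)[] //|].
    by exists X => //; exists x.
  by have [_ FX] := Cfilter X x CX Xx; move=> y /FX Xy; exists X.
have [M0|[Mprop FM]] := PM.
  exfalso; apply: (Mmax F); last by right; split.
  by rewrite M0; split => // /(_ \top FT).
have Multra : ultrafilter M.
  apply: maximal_proper_filter_ultra => // G MG Gprop.
  by apply: (Mmax G MG); right; split => //; apply: subset_trans FM (properW MG).
by exists (exist _ M Multra).
Qed.

Lemma stone_compact (I : set L) : I \bot ->
  (forall x y, I y -> x <= y -> I x) -> (forall x y, I x -> I y -> I (x `|` y)) ->
  (forall U : stone L, exists2 a, I a & clopen a U) -> I \top.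
Proof.
move=> Ibot Idown Ijoin Icover; apply: contrapT => ItopN.
have Fprop : proper_filter [set x | I (~` x)].
  split => /=; rewrite ?compl1 ?compl0 //.
  - by move=> x y Ix xy; apply: Idown Ix _; rewrite leC.
  - by move=> x y Ix Iy; rewrite complI; exact: Ijoin.
have [U FU] := proper_filter_ultra Fprop.
have [a Ia aU] := Icover U.
have : clopen (~` a) U by apply: FU; rewrite /= complK.
by rewrite clopenC.
Qed.

Lemma decreasing_ultrafilter (s : nat -> L) : (forall k, s k != \bot) ->
  (forall k, s k.+1 <= s k) -> exists U : stone L, forall k, clopen (s k) U.
Proof.
move=> s0 sS.
have sle : {homo s : i j / (i <= j)%N >-> j <= i}.
  by apply: homo_leq => // y x z xy yz; exact: le_trans yz xy.
have Fprop : proper_filter [set x | exists k, s k <= x].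
  split.
  - by exists 0%N; exact: lex1.
  - by move=> x y [k sx] xy; exists k; exact: le_trans xy.
  - move=> x y [i sx] [j sy]; exists (maxn i j); rewrite lexI.
    rewrite (le_trans (sle _ _ (leq_maxl i j)) sx).
    by rewrite (le_trans (sle _ _ (leq_maxr i j)) sy).
  - by move=> [k]; rewrite lex0; apply/negP.
have [U FU] := proper_filter_ultra Fprop.
by exists U => k; apply: FU; exists k.
Qed.

End UltrafilterLemma.

Section StoneSpace.
Context {d : Order.disp_t} {L : ctbDistrLatticeType d}.
Implicit Types (K O : set (stone L)).

Lemma stone_separation K O : stone_open (setC K) -> stone_open O ->
  K `<=` O -> exists a, K `<=` clopen a /\ clopen a `<=` O.
Proof.
move=> Kclosed Oopen KO.
pose I c := exists a b,
  [/\ clopen a `<=` O, clopen b `<=` setC K & c <= a `|` b].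
have [a [b [aO bK abT]]] : I \top.
  apply: stone_compact.
  - by exists \bot, \bot; rewrite clopen0 le0x; split => //; exact: sub0set.
  - by move=> x y [a [b [aO bK ab]]] xy; exists a, b; split => //; exact: le_trans ab.
  - move=> x y [a [b [aO bK ab]]] [a' [b' [aO' bK' ab']]].
    exists (a `|` a'), (b `|` b'); rewrite !clopenU; split.
    + by move=> U [/aO|/aO'].
    + by move=> U [/bK|/bK'].
    + by rewrite joinACA leU2.
  - move=> U; have [KU|KNU] := pselect (K U).
      have [a [aU aO]] := Oopen U (KO U KU).
      exists a => //; exists a, \bot.
      by rewrite clopen0 joinx0; split => //; exact: sub0set.
    have [b [bU bK]] := Kclosed U KNU.
    exists b => //; exists \bot, b.
    by rewrite clopen0 join0x; split => //; exact: sub0set.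
move: abT; rewrite le1x => /eqP abT; exists a; split => // U KU.
have : clopen (a `|` b) U by rewrite abT clopenT.
by rewrite clopenU => -[//|/bK].
Qed.

Lemma stone_open_bigcup_clopen O (K : nat -> set (stone L)) :
  stone_open O -> (forall n, stone_open (setC (K n))) -> O = \bigcup_n K n ->
  exists c : nat -> L, O = \bigcup_n clopen (c n).
Proof.
move=> Oopen Kclosed OK.
have KO n : K n `<=` O by rewrite OK; exact: bigcup_sup.
have [c cP] := choice (fun n => stone_separation (Kclosed n) Oopen (KO n)).
exists c; apply/seteqP; split; last by move=> U [n _ /(cP n).2].
by rewrite {1}OK => U [n _ /(cP n).1 cU]; exists n.
Qed.

End StoneSpace.

Section SigmaAlgebra.
Context {T : Type} (S : set (set T)) (Ssigma : sigma_algebra setT S).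

Lemma sigma_set0 : S set0. Proof. by case: Ssigma. Qed.

Lemma sigma_setC X : S X -> S (setC X).
Proof. by case: Ssigma => _ SC _; rewrite -setTD; exact: SC. Qed.

Lemma sigma_bigcup (X : nat -> set T) : (forall n, S (X n)) -> S (\bigcup_n X n).
Proof. by case: Ssigma => _ _; apply. Qed.

Lemma sigma_setU X Y : S X -> S Y -> S (setU X Y).
Proof.
by move=> SX SY; rewrite -bigcup2E; apply: sigma_bigcup => -[|[|n]] //; exact: sigma_set0.
Qed.

Lemma sigma_setI X Y : S X -> S Y -> S (setI X Y).
Proof.
move=> SX SY; rewrite -[setI X Y]setCK setCI.
by apply/sigma_setC/sigma_setU; apply: sigma_setC.
Qed.

End SigmaAlgebra.

Section BaireSets.
Context {d : Order.disp_t} {A : ctbDistrLatticeType d}.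
Local Open Scope ring_scope.

Lemma stone_continuous_gt (f : stone A -> R) (r : R) : stone_continuous f ->
  exists c : nat -> A, [set U | r < f U] = \bigcup_n clopen (c n).
Proof.
move=> fcont; pose K n := [set U | r + n.+1%:R^-1 <= f U].
apply: (stone_open_bigcup_clopen (K := K)).
- exact: fcont (@open_gt _ r).
- move=> n; have -> : setC (K n) = f @^-1` [set x | x < r + n.+1%:R^-1].
    by apply/seteqP; split => U /=; rewrite ltNge => /negP.
  exact/fcont/open_lt.
- apply/seteqP; split => U /=; first by move=> /ltr_add_invr[n /ltW fU]; exists n.
  by move=> [n _]; apply: lt_le_trans; rewrite ltrDl invr_gt0.
Qed.

Lemma baire_smallest (S : set (set (stone A))) : sigma_algebra setT S ->
  (forall a, S (clopen a)) -> @baire _ A `<=` S.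
Proof.
move=> Ssigma Sclopen X; apply => // f fcont W Wborel.
have Sgt r : S [set U | r < f U].
  by have [c ->] := stone_continuous_gt r fcont; exact: sigma_bigcup.
suff : <<s setT, R.-ocitv.-measurable >> `<=` image_set_system setT f S.
  by move/(_ W Wborel); rewrite /image_set_system /= setTI.
apply: smallest_sub; first exact: (@sigma_algebra_image _ (ocitv_type R) _ f _ Ssigma).
move=> _ [[a b] _ <-]; rewrite /image_set_system /= setTI.
have -> : f @^-1` `]a, b]%classic = setI [set U | a < f U] (setC [set U | b < f U]).
  apply/seteqP; split => U; rewrite /= in_itv /= leNgt.
    by case/andP => aU /negP bU; split.
  by case=> -> /negP.
by apply: sigma_setI => //; apply: sigma_setC.
Qed.

Lemma baire_sigma_algebra : sigma_algebra setT (@baire _ A).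
Proof.
split => [S Ssigma _|X Xbaire S Ssigma SB|X Xbaire S Ssigma SB].
- exact: sigma_set0.
- by rewrite setTD; apply: sigma_setC => //; exact: Xbaire.
- by apply: sigma_bigcup => // n; exact: Xbaire.
Qed.

Lemma baire_clopen (a : A) : baire (clopen a).
Proof.
move=> S _ SB; pose f U : R := (`[< clopen a U >] : bool)%:R.
have fa : clopen a = f @^-1` [set 1].
  apply/seteqP; split => U /=; rewrite /f; first by move=> aU; rewrite asboolT.
  by case: asboolP => // _ /eqP; rewrite eq_sym oner_eq0.
rewrite fa; apply: SB; last exact: measurable_set1.
move=> V _ U VU; pose b := if `[< clopen a U >] then a else ~` a.
have bU : clopen b U by rewrite /b; case: asboolP => // aNU; rewrite clopenC.
have fb W : clopen b W -> f W = f U.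
  rewrite /b /f; case: (asboolP (clopen a U)) => aU; first by move=> /asboolT ->.
  by rewrite clopenC => /asboolF ->.
by exists b; split => // W /fb fW; rewrite /preimage /= fW.
Qed.

Lemma baire_lubE (X : nat -> set (stone A)) Y :
  (forall n, baire (X n)) -> baire_lub X Y -> Y = \bigcup_n X n.
Proof.
move=> Xbaire [_ [XY Ymin]]; apply/seteqP; split; last by move=> U [n _ /XY].
by apply: Ymin => [|n]; [apply: (sigma_bigcup baire_sigma_algebra)|exact: bigcup_sup].
Qed.

Lemma baire_lub_bigcup (X : nat -> set (stone A)) :
  (forall n, baire (X n)) -> baire_lub X (\bigcup_n X n).
Proof.
move=> Xbaire; split; first by apply: (sigma_bigcup baire_sigma_algebra).
by split => [n|Z _ XZ U [n _ /XZ]]; first exact: bigcup_sup.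
Qed.

End BaireSets.

Lemma is_lub_unique {d : Order.disp_t} {B : ctbDistrLatticeType d}
  (s : nat -> B) b b' : is_lub s b -> is_lub s b' -> b = b'.
Proof. by move=> [sb bmin] [sb' b'min]; apply: le_anti; rewrite bmin ?b'min. Qed.

Section BaireSigmaHom.
Context {dA dB : Order.disp_t} {A : ctbDistrLatticeType dA} {B : ctbDistrLatticeType dB}.

Lemma baire_sigma_hom_unique (Phi Psi : set (stone A) -> B) :
  baire_sigma_hom Phi -> baire_sigma_hom Psi ->
  (forall a, Phi (clopen a) = Psi (clopen a)) ->
  forall X, baire X -> Phi X = Psi X.
Proof.
move=> [[Phi0 _] _ _ PhiC Phi_lub] [[Psi0 _] _ _ PsiC Psi_lub] PhiPsi.
suff agree_sigma : sigma_algebra setT [set X | baire X /\ Phi X = Psi X].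
  move=> X /(baire_smallest agree_sigma) [] // a.
  by split; [exact: baire_clopen|exact: PhiPsi].
split.
- by split; [exact: sigma_set0 baire_sigma_algebra|rewrite Phi0 Psi0].
- move=> X [Xbaire PhiPsiX]; rewrite setTD.
  by split; [apply: (sigma_setC baire_sigma_algebra)|rewrite PhiC // PsiC // PhiPsiX].
- move=> X agreeX; have Xbaire n := (agreeX n).1.
  have Xlub := baire_lub_bigcup Xbaire.
  split; first exact: Xlub.1.
  apply: is_lub_unique (Phi_lub _ _ Xbaire Xlub) _.
  by under eq_fun do rewrite (agreeX _).2; exact: Psi_lub.
Qed.

End BaireSigmaHom.

Section Meager.
Context {d : Order.disp_t} {B : ctbDistrLatticeType d}.
Implicit Types (b c : B) (N M Y : set (stone B)).

(* Nowhere density tested on the clopen base. *)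
Definition nowhere_dense N := forall c, c != \bot ->
  exists2 c', c' != \bot & c' <= c /\ clopen c' `<=` setC N.

Definition meager M := exists2 N : nat -> set (stone B),
  (forall k, nowhere_dense (N k)) & M `<=` \bigcup_k N k.

Lemma nowhere_dense0 : nowhere_dense set0.
Proof. by move=> c c0; exists c => //; split => // U _ []. Qed.

Lemma nowhere_dense_meager N : nowhere_dense N -> meager N.
Proof. by move=> Nnwd; exists (fun _ => N) => // U NU; exists 0%N. Qed.

Lemma meager0 : meager set0.
Proof. exact: nowhere_dense_meager nowhere_dense0. Qed.

Lemma meagerS M M' : M' `<=` M -> meager M -> meager M'.
Proof. by move=> M'M [N Nnwd MN]; exists N => // U /M'M/MN. Qed.

Lemma meager_bigcup (M : nat -> set (stone B)) :
  (forall n, meager (M n)) -> meager (\bigcup_n M n).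
Proof.
move=> Mmeager; have /choice[N NP] : forall n, exists Nn : nat -> set (stone B),
    (forall k, nowhere_dense (Nn k)) /\ M n `<=` \bigcup_k Nn k.
  by move=> n; have [Nn ? ?] := Mmeager n; exists Nn.
exists (fun m => if unpickle m is Some (n, k) then N n k else set0).
  by move=> m; case: (unpickle m) => [[n k]|]; [exact: (NP n).1|exact: nowhere_dense0].
move=> U [n _ /(NP n).2 [k _ NU]].
by exists (pickle (n, k)) => //; rewrite pickleK.
Qed.

Lemma meagerU M M' : meager M -> meager M' -> meager (setU M M').
Proof.
by move=> ? ?; rewrite -bigcup2E; apply: meager_bigcup => -[|[|n]] //; exact: meager0.
Qed.

(* The Baire category theorem: a decreasing sequence of nonzero elements
   avoiding [N 0], [N 1], ... in turn yields, through an ultrafilter, a point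
   of [clopen c] outside every [N k]. *)
Lemma meager_clopen_eq0 c : meager (clopen c) -> c = \bot.
Proof.
move=> [N Nnwd cN]; apply/eqP/contraT => c0.
have /choice[g gP] : forall kb : nat * B, exists b', kb.2 != \bot ->
    [/\ b' != \bot, b' <= kb.2 & clopen b' `<=` setC (N kb.1)].
  move=> [k b]; have [->|b0] := eqVneq b \bot; first by exists \bot; rewrite eqxx.
  by have [b' b'0 [b'b b'N]] := Nnwd k b b0; exists b'.
pose s := fix s k := if k is k'.+1 then g (k', s k') else c.
have s0 k : s k != \bot by elim: k => //= k /(gP (k, _))[].
have sS k : s k.+1 <= s k by case: (gP (k, s k) (s0 k)).
have [U sU] := decreasing_ultrafilter s0 sS.
have [k _ NkU] := cN U (sU 0%N).
by have [_ _ /(_ U (sU k.+1))] := gP (k, s k) (s0 k).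
Qed.

Lemma nowhere_dense_lub (b : nat -> B) s : is_lub b s ->
  nowhere_dense (setD (clopen s) (\bigcup_n clopen (b n))).
Proof.
move=> [bs smin] c c0.
have [cs|cs] := eqVneq (c `&` ~` s) \bot; last first.
  exists (c `&` ~` s) => //; split; first exact: leIl.
  by rewrite clopenI clopenC => U [_ sNU] [].
have [[n cbn]|cb] := pselect (exists n, c `&` b n != \bot).
  exists (c `&` b n) => //; split; first exact: leIl.
  by rewrite clopenI => U [_ bU] [_]; apply; exists n.
have cs' : c <= s by rewrite -diff_eq0 diffE cs.
have sc : s <= ~` c.
  by apply: smin => n; rewrite lexC -disj_leC; apply: contra_notT cb => ?; exists n.
by move: (le_trans cs' sc); rewrite -disj_leC meetxx (negPf c0).
Qed.

End Meager.

Section MeagerRepresentative.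
Context {d : Order.disp_t} {B : ctbDistrLatticeType d}.
Implicit Types (b c : B) (Y : set (stone B)).

Definition meager_rep Y b :=
  meager (setD Y (clopen b)) /\ meager (setD (clopen b) Y).

Lemma meager_rep_clopen b : meager_rep (clopen b) b.
Proof. by rewrite /meager_rep setDv; split; exact: meager0. Qed.

Lemma meager_rep_le Y b c : meager_rep Y b -> meager_rep Y c -> b <= c.
Proof.
move=> [_ bY] [Yc _]; rewrite -diff_eq0 diffE; apply/eqP/meager_clopen_eq0.
apply: meagerS (meagerU bY Yc); rewrite clopenI clopenC => U [bU cNU].
by have [YU|YNU] := pselect (Y U); [right|left].
Qed.

Lemma meager_rep_unique Y b c : meager_rep Y b -> meager_rep Y c -> b = c.
Proof.
by move=> Yb Yc; apply: le_anti; rewrite (meager_rep_le Yb Yc) (meager_rep_le Yc Yb).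
Qed.

Lemma meager_repC Y b : meager_rep Y b -> meager_rep (setC Y) (~` b).
Proof.
move=> [Yb bY]; rewrite /meager_rep clopenC.
by split; [apply: meagerS bY|apply: meagerS Yb] => U [? /contrapT].
Qed.

Lemma meager_repU Y Y' b b' : meager_rep Y b -> meager_rep Y' b' ->
  meager_rep (setU Y Y') (b `|` b').
Proof.
move=> [Yb bY] [Yb' bY']; rewrite /meager_rep clopenU; split.
  by apply: meagerS (meagerU Yb Yb') => U [[YU|YU] /not_orP[bU bU']]; [left|right].
by apply: meagerS (meagerU bY bY') => U [[bU|bU] /not_orP[YU YU']]; [left|right].
Qed.

Lemma meager_rep_bigcup (Y : nat -> set (stone B)) (b : nat -> B) s :
  (forall n, meager_rep (Y n) (b n)) -> is_lub b s ->
  meager_rep (\bigcup_n Y n) s.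
Proof.
move=> Yb bs; have [bles _] := bs; split.
  apply: meagerS (meager_bigcup (fun n => (Yb n).1)) => U [[n _ YU] sNU].
  by exists n => //; split => // /(clopenS (bles n)).
apply: meagerS (meagerU (meager_bigcup (fun n => (Yb n).2))
                        (nowhere_dense_meager (nowhere_dense_lub bs))).
move=> U [sU YNU]; have [[n _ bU]|bNU] := pselect ((\bigcup_n clopen (b n)) U).
  by left; exists n => //; split => // YU; apply: YNU; exists n.
by right.
Qed.

End MeagerRepresentative.

Section Extension.
Context {dA dB : Order.disp_t} {A : ctbDistrLatticeType dA} {B : ctbDistrLatticeType dB}.
Variables (phi : A -> B) (phi_hom : bool_hom phi).

Lemma bool_hom_le x y : x <= y -> phi x <= phi y.
Proof. by case: phi_hom => _ _ _ phiI _; rewrite !leEmeet -phiI => /eqP ->. Qed.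

Lemma ultrafilter_comap (V : stone B) : ultrafilter [set a | proj1_sig V (phi a)].
Proof.
have [phi0 phiT _ phiI phiC] := phi_hom.
have [V0 VT Vup Vmeet Vcompl] := proj2_sig V.
split => /=; rewrite ?phi0 ?phiT //.
- by move=> x y Vx /bool_hom_le; exact: Vup.
- by move=> x y Vx Vy; rewrite phiI; exact: Vmeet.
- by move=> x; rewrite phiC.
Qed.

Definition stone_map (V : stone B) : stone A := exist _ _ (ultrafilter_comap V).

(* The junk value [\bot] is only taken outside the Baire sets. *)
Definition extension (X : set (stone A)) : B :=
  xget \bot [set b | meager_rep (stone_map @^-1` X) b].

Lemma extensionE X b : meager_rep (stone_map @^-1` X) b -> extension X = b.
Proof. by move=> Xb; apply: xget_unique => // c /meager_rep_unique; apply. Qed.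

Lemma extension_clopen a : extension (clopen a) = phi a.
Proof. exact/extensionE/meager_rep_clopen. Qed.

Lemma extension0 : extension set0 = \bot.
Proof. by apply/extensionE; rewrite preimage_set0 -clopen0; exact: meager_rep_clopen. Qed.

Lemma extensionT : extension setT = \top.
Proof. by apply/extensionE; rewrite preimage_setT -clopenT; exact: meager_rep_clopen. Qed.

Hypothesis B_sigma : sigma_complete B.

Lemma baire_meager_rep X : baire X -> exists b, meager_rep (stone_map @^-1` X) b.
Proof.
move: X; apply: baire_smallest => [|a]; last first.
  by exists (phi a); exact: meager_rep_clopen.
split.
- by exists \bot; rewrite preimage_set0 -clopen0; exact: meager_rep_clopen.
- by move=> X [b Xb]; exists (~` b); rewrite setTD preimage_setC; exact: meager_repC.
- move=> X /choice[b Xb]; have [[s bs] _] := B_sigma b.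
  by exists s; rewrite preimage_bigcup; exact: meager_rep_bigcup bs.
Qed.

Lemma extension_rep X : baire X -> meager_rep (stone_map @^-1` X) (extension X).
Proof. by move=> /baire_meager_rep[b Xb]; rewrite (extensionE Xb). Qed.

Lemma extensionC X : baire X -> extension (setC X) = ~` extension X.
Proof.
move=> Xbaire; apply/extensionE; rewrite preimage_setC.
exact/meager_repC/extension_rep.
Qed.

Lemma extensionU X Y : baire X -> baire Y ->
  extension (setU X Y) = extension X `|` extension Y.
Proof.
move=> Xbaire Ybaire; apply/extensionE; rewrite preimage_setU.
exact: meager_repU (extension_rep Xbaire) (extension_rep Ybaire).
Qed.

Lemma extensionI X Y : baire X -> baire Y ->
  extension (setI X Y) = extension X `&` extension Y.
Proof.
move=> Xbaire Ybaire.
have XCbaire : baire (setC X) by apply: (sigma_setC baire_sigma_algebra).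
have YCbaire : baire (setC Y) by apply: (sigma_setC baire_sigma_algebra).
rewrite -[setI X Y]setCK setCI extensionC ?extensionU ?extensionC ?complU ?complK //.
by apply: (sigma_setU baire_sigma_algebra).
Qed.

Lemma extension_sigma_hom : baire_sigma_hom extension.
Proof.
split; [by split; [exact: extension0|exact: extensionT]|exact: extensionU|
        exact: extensionI|exact: extensionC|].
move=> X Y Xbaire /(baire_lubE Xbaire) ->.
have [[s bs] _] := B_sigma (extension \o X).
by rewrite (extensionE (meager_rep_bigcup (fun n => extension_rep (Xbaire n)) bs)).
Qed.

End Extension.

Theorem proposition2p22 (dA dB : Order.disp_t)
  (A : ctbDistrLatticeType dA) (B : ctbDistrLatticeType dB)
  (HB : sigma_complete B) (phi : A -> B) (Hphi : bool_hom phi) :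
  exists Phi : set (stone A) -> B,
    [/\ baire_sigma_hom Phi,
        (forall a : A, Phi (clopen a) = phi a)
      & (forall Psi : set (stone A) -> B,
           baire_sigma_hom Psi -> (forall a : A, Psi (clopen a) = phi a) ->
           forall X, baire X -> Psi X = Phi X)].
Proof.
have ext_hom := extension_sigma_hom Hphi HB.
exists (extension Hphi); split => //; first exact: extension_clopen.
move=> Psi Psi_hom Psi_clopen; apply: baire_sigma_hom_unique Psi_hom ext_hom _ => a.
by rewrite Psi_clopen extension_clopen.
Qed.
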